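(* In the setting below, $$\tau^*(K)=\langle \tau^*(q),\ \overline\varphi(\tau^*(r))\mid q\in Q,\ r\in R,\ \varphi\in\Phi^*\rangle,$$ the subgroup of $M$ generated by these elements.
   Context: Let $G=\langle S\mid Q\mid\Phi\mid R\rangle$ be given by a finite invariant $L$-presentation: $F$ is the free group on the finite set $S$, $Q,R\subseteq F$ finite, $\Phi$ a finite set of endomorphisms of $F$ with generated monoid $\Phi^*$, $K=\langle Q\cup\bigcup_{\varphi\in\Phi^*}\varphi(R)\rangle^F$, and invariance means $\varphi(K)\subseteq K$ for all $\varphi\in\Phi$. Let $n\ge3$ and $K_i:=K\gamma_i(F)$. Let $\tau^*:F\to H^*$ be an epimorphism onto a group $H^*$ with $\ker\tau^*=[K_{n-1},F]$, and let $M:=\tau^*(K_{n-1})$, a central (hence abelian) subgroup of $H^*$. For $\varphi\in\Phi^*$, $\overline\varphi$ denotes the endomorphism of $M$ with $\overline\varphi(\tau^*(k))=\tau^*(\varphi(k))$ for $k\in K_{n-1}$. *)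

From HB Require Import structures.
From mathcomp Require Import all_boot.

Set Implicit Arguments.
Unset Strict Implicit.
Unset Printing Implicit Defensive.

Local Open Scope group_scope.

Section GroupSets.
Variable G : groupType.

Definition gset := G -> Prop.

Definition gsubset (A B : gset) : Prop := forall x, A x -> B x.

Definition gfull : gset := fun _ => True.

Definition gunion (A B : gset) : gset := fun x => A x \/ B x.

Definition is_subgroup (A : gset) : Prop :=
  A 1 /\ (forall x y, A x -> A y -> A (x * y)) /\ (forall x, A x -> A x^-1).

Definition gen (X : gset) : gset :=
  fun g => forall H : gset, is_subgroup H -> gsubset X H -> H g.

Definition ncl (X : gset) : gset :=
  gen (fun g => exists x h, X x /\ g = x ^ h).

Definition gcomm (A B : gset) : gset :=
  gen (fun g => exists a b, A a /\ B b /\ g = [~ a, b]).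

Definition gprod (A B : gset) : gset :=
  fun g => exists a b, A a /\ B b /\ g = a * b.

(* lower central series: lcs_aux k = gamma_{k+1}(G) *)
Fixpoint lcs_aux (k : nat) : gset :=
  match k with
  | 0 => gfull
  | k'.+1 => gcomm (lcs_aux k') gfull
  end.

(* gamma i = gamma_i(G), with gamma_1(G) = G, gamma_{i+1}(G) = [gamma_i(G), G]
   (gamma 0 is conventionally also G; it is never used with i = 0 here) *)
Definition gamma (i : nat) : gset := lcs_aux i.-1.

End GroupSets.

Definition is_hom (G H : groupType) (f : G -> H) : Prop :=
  forall x y, f (x * y) = f x * f y.

Definition gimage (G H : groupType) (f : G -> H) (A : gset G) : gset H :=
  fun h => exists a, A a /\ h = f a.

Definition is_free_on (S : Type) (F : groupType) (iota : S -> F) : Prop :=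
  forall (H : groupType) (f : S -> H),
    exists g : F -> H, is_hom g /\ (forall s, g (iota s) = f s) /\
      (forall g' : F -> H, is_hom g' -> (forall s, g' (iota s) = f s) ->
         forall x, g' x = g x).

(* the element of Phi^* given by a word l = [:: i1; ...; ik] over the index
   set of Phi: phi_{i1} o ... o phi_{ik} (the empty word is the identity) *)
Definition phi_word (F : groupType) (I : Type) (Phi : I -> F -> F)
  (l : seq I) : F -> F :=
  fun x => foldr (fun i y => Phi i y) x l.

Definition Lpres_K (F : groupType) (I : Type) (Q R : seq F) (Phi : I -> F -> F)
  : gset F :=
  ncl (gunion (fun g => g \in Q)
              (fun g => exists (l : seq I) r, r \in R /\ g = phi_word Phi l r)).

From HB Require Import structures.
From mathcomp Require Import all_boot.
Set Implicit Arguments.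
Unset Strict Implicit.
Local Open Scope group_scope.

(* Write X = Q u { phi(r) | r in R, phi in Phi^* }, so that
   K = <X>^F is generated by the conjugates x^g of elements x of X.
   1. Generated subgroups commute with homomorphisms: f(<Y>) = <f(Y)>.
   2. Hence, if f(x^g) = f(x) for every x in Y and g, then f(<Y>^F) = <f(Y)>.
   3. For k in K the commutator [k, g] lies in [K_{n-1}, F] = ker tau, so
      tau(k^g) = tau(k): tau is conjugation-invariant on K, in particular
      on X, and step 2 gives tau(K) = <tau(X)>.
   4. Finally tau(X) is exactly the given generating set: tau(phi(r)) is
      phibar(tau(r)) by definition of phibar, since r in K <= K_{n-1}. *)

Section Homomorphisms.
Variables (G H : groupType) (f : G -> H).
Hypothesis f_hom : is_hom f.

Lemma hom1 : f 1 = 1.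
Proof. by apply: (@mulgI _ (f 1)); rewrite -f_hom !mulg1. Qed.

Lemma homV x : f x^-1 = (f x)^-1.
Proof. by symmetry; apply: mulg1_eq; rewrite -f_hom mulgV hom1. Qed.

Lemma hom_conj_of_comm x g : f [~ x, g] = 1 -> f (x ^ g) = f x.
Proof. by rewrite commgEl f_hom homV => /mulg1_eq; rewrite invgK. Qed.

Lemma image_subgroup (A : gset G) : is_subgroup A -> is_subgroup (gimage f A).
Proof.
case=> A1 [AM AV]; split; [|split].
- by exists 1; rewrite hom1.
- by move=> _ _ [a [ha ->]] [b [hb ->]]; exists (a * b); rewrite f_hom; auto.
- by move=> _ [a [ha ->]]; exists a^-1; rewrite homV; auto.
Qed.

Lemma preimage_subgroup (B : gset H) :
  is_subgroup B -> is_subgroup (fun x => B (f x)).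
Proof.
case=> B1 [BM BV]; split; [|split].
- by rewrite hom1.
- by move=> x y hx hy; rewrite f_hom; apply: BM.
- by move=> x hx; rewrite homV; apply: BV.
Qed.

End Homomorphisms.

Section Generation.
Variable G : groupType.
Implicit Types X Y : gset G.

Lemma gen_subgroup X : is_subgroup (gen X).
Proof.
split; [|split].
- by move=> A [].
- move=> x y hx hy A hA hXA; case: (hA) => _ [AM _].
  by apply: AM; [apply: hx | apply: hy].
- by move=> x hx A hA hXA; case: (hA) => _ [_ AV]; apply: AV; apply: hx.
Qed.

Lemma gen_in X x : X x -> gen X x.
Proof. by move=> hx A _ hXA; apply: hXA. Qed.

Lemma gen_min X (A : gset G) : is_subgroup A -> gsubset X A -> gsubset (gen X) A.
Proof. by move=> hA hXA x hx; apply: hx. Qed.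

Lemma gen_mono X Y : gsubset X Y -> gsubset (gen X) (gen Y).
Proof.
move=> hXY; apply: gen_min; first exact: gen_subgroup.
by move=> x /hXY; apply: gen_in.
Qed.

Lemma gamma1 k : @gamma G k 1.
Proof. by rewrite /gamma; case: k.-1 => [|j] //=; move=> A []. Qed.

End Generation.

Lemma image_gen {G H : groupType} {f : G -> H} {Y : gset G} :
  is_hom f -> forall h, gimage f (gen Y) h <-> gen (gimage f Y) h.
Proof.
move=> f_hom h; split.
- case=> y [hy ->].
  apply: (hy (fun x => gen (gimage f Y) (f x))).
  + by apply: preimage_subgroup => //; apply: gen_subgroup.
  + by move=> x hx; apply: gen_in; exists x.
- apply: gen_min; first exact/image_subgroup/gen_subgroup.
  by move=> _ [y [hy ->]]; exists y; split=> //; apply: gen_in.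
Qed.

Lemma image_ncl {G H : groupType} {f : G -> H} {Y : gset G} :
  is_hom f -> (forall y g, Y y -> f (y ^ g) = f y) ->
  forall h, gimage f (ncl Y) h <-> gen (gimage f Y) h.
Proof.
move=> f_hom f_conj h; split.
- move/(image_gen f_hom); apply: gen_mono.
  by move=> _ [_ [[y [g [hy ->]]] ->]]; exists y; rewrite f_conj.
- move=> hh; apply/(image_gen f_hom); move: hh; apply: gen_mono.
  by move=> _ [y [hy ->]]; exists y; split=> //; exists y, 1; rewrite conjg1.
Qed.

Theorem mainTheorem7
  (S : finType) (F : groupType) (iota : S -> F) (Hfree : is_free_on iota)
  (Q R : seq F) (I : finType) (Phi : I -> F -> F)
  (Phi_hom : forall i, is_hom (Phi i))
  (Hinv : forall i, gsubset (gimage (Phi i) (Lpres_K Q R Phi)) (Lpres_K Q R Phi))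
  (n : nat) (hn : 3 <= n)
  (Hs : groupType) (tau : F -> Hs) (tau_hom : is_hom tau)
  (tau_surj : forall h : Hs, exists g, tau g = h)
  (tau_ker : forall g, tau g = 1 <->
     gcomm (gprod (Lpres_K Q R Phi) (@gamma F n.-1)) (@gfull F) g)
  (phibar : seq I -> Hs -> Hs)
  (phibar_def : forall (l : seq I) (k : F),
     gprod (Lpres_K Q R Phi) (@gamma F n.-1) k ->
     phibar l (tau k) = tau (phi_word Phi l k)) :
  forall h : Hs,
    gimage tau (Lpres_K Q R Phi) h <->
    gen (gunion (fun x => exists q, q \in Q /\ x = tau q)
                (fun x => exists (l : seq I) r, r \in R /\ x = phibar l (tau r))) h.
Proof.
set K := Lpres_K Q R Phi.
pose X : gset F := gunion (fun g => g \in Q)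
  (fun g => exists (l : seq I) r, r \in R /\ g = phi_word Phi l r).
have X_K x : X x -> K x.
  by move=> hx; apply: gen_in; exists x, 1; rewrite conjg1.
have K_Kn k : K k -> gprod K (@gamma F n.-1) k.
  by move=> hk; exists k, 1; rewrite mulg1; split=> //; split=> //; apply: gamma1.
(* step 3: [x, g] in [K_{n-1}, F] = ker tau *)
have tau_conj x g : X x -> tau (x ^ g) = tau x.
  move=> /X_K /K_Kn hx; apply: hom_conj_of_comm => //.
  by apply/tau_ker; apply: gen_in; exists x, g.
have R_Kn r : r \in R -> gprod K (@gamma F n.-1) r.
  by move=> hr; apply: K_Kn; apply: X_K; right; exists [::], r.
move=> h; split.
- move/(image_ncl tau_hom tau_conj); apply: gen_mono.
  move=> _ [x [[hq|[l [r [hr ->]]]] ->]]; first by left; exists x.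
  by right; exists l, r; rewrite phibar_def; auto.
- move=> hh; apply/(image_ncl tau_hom tau_conj); move: hh; apply: gen_mono.
  move=> _ [[q [hq ->]]|[l [r [hr ->]]]]; first by exists q; split=> //; left.
  by exists (phi_word Phi l r); rewrite phibar_def; auto; split=> //; right; exists l, r.
Qed.
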